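(* Let $n=2k$ with $k\ge 2$. If $S$ is a strong resolving set of $S_n$, then $|S|\ge \frac{3n}{2}$.
   Context: For $n\ge 3$, $S_n$ is the graph with vertex set $\{a_i,b_i,c_i,d_i : 1\le i\le n\}$ and edge set $\{a_ia_{i+1}, b_ib_{i+1}, c_ic_{i+1}, d_id_{i+1}, a_{i+1}b_i, a_ib_i, b_ic_i, c_id_i : 1\le i\le n\}$, indices taken modulo $n$. $d$ is the graph distance. A vertex $w$ strongly resolves distinct vertices $u,v$ if $d(v,w)=d(v,u)+d(u,w)$ or $d(u,w)=d(u,v)+d(v,w)$. A set $S$ is a strong resolving set if every two distinct vertices are strongly resolved by some vertex of $S$. *)

From mathcomp Require Import all_boot.
Set Implicit Arguments. Unset Strict Implicit. Unset Printing Implicit Defensive.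

Section Dist.
Variables (T : finType) (adj : rel T).

Fixpoint reach (m : nat) (u v : T) : bool :=
  if m is m'.+1 then reach m' u v || [exists w, reach m' u w && adj w v]
  else u == v.

(* graph distance: least m with reach m u v (the graphs used below are
   connected, so the fallback value #|T| for unreachable pairs is never used) *)
Definition gdist (u v : T) : nat := find (fun m => reach m u v) (iota 0 #|T|).

Definition strongly_resolves (w u v : T) : bool :=
  (gdist v w == gdist v u + gdist u w) || (gdist u w == gdist u v + gdist v w).

Definition strong_resolving_set (S : {set T}) : Prop :=
  forall u v : T, u != v -> exists2 w, w \in S & strongly_resolves w u v.
End Dist.

(* The graph S_n: vertex (t, i) with t = 0,1,2,3 standing for a_i, b_i, c_i, d_i. *)
Definition Sn_vertex (n : nat) := ('I_4 * 'I_n)%type.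

Definition Sn_edge (n : nat) (x y : Sn_vertex n) : bool :=
  let: (t, i) := x in let: (s, j) := y in
  [|| (t == s) && (nat_of_ord j == (nat_of_ord i).+1 %% n),          (* x_i x_{i+1} *)
      [&& nat_of_ord t == 0, nat_of_ord s == 1 & nat_of_ord i == (nat_of_ord j).+1 %% n], (* a_{i+1} b_i *)
      [&& nat_of_ord t == 0, nat_of_ord s == 1 & nat_of_ord i == nat_of_ord j],      (* a_i b_i *)
      [&& nat_of_ord t == 1, nat_of_ord s == 2 & nat_of_ord i == nat_of_ord j]       (* b_i c_i *)
    | [&& nat_of_ord t == 2, nat_of_ord s == 3 & nat_of_ord i == nat_of_ord j]].     (* c_i d_i *)

Definition Sn_adj (n : nat) : rel (Sn_vertex n) :=
  fun x y => Sn_edge x y || Sn_edge y x.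

From mathcomp Require Import all_boot zify.
Set Implicit Arguments. Unset Strict Implicit. Unset Printing Implicit Defensive.

(* Call u maximally distant from v when no neighbour of u is farther from v.
   If u and v are mutually maximally distant, a geodesic through one of them
   cannot be extended beyond it, so only u and v strongly resolve {u, v}: every
   strong resolving set meets {u, v}. In S_2k the pairs {b_i, d_(i+k)}, i < 2k,
   and {a_i, a_(i+k)}, i < k, are mutually maximally distant: the distances
   k + 2 and k bound from above the distance from b_j or d_j to any vertex and
   from a_j to any vertex of the a- and b-layers. These 3k pairs are disjoint. *)

Section GraphDistance.
Variables (T : finType) (adj : rel T).

Lemma reach_step m u w v : reach adj m u w -> adj w v -> reach adj m.+1 u v.
Proof. by move=> r a /=; apply/orP; right; apply/existsP; exists w; rewrite r. Qed.

Lemma reach_mono m p u v : m <= p -> reach adj m u v -> reach adj p u v.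
Proof.
elim: p => [|p IH]; first by rewrite leqn0 => /eqP ->.
by rewrite leq_eqVlt => /predU1P [-> // | /IH r /r] /= ->.
Qed.

Lemma reach_cat m p u w v :
  reach adj m u w -> reach adj p w v -> reach adj (m + p) u v.
Proof.
move=> r1; elim: p v => [|p IH] v /=; first by move/eqP <-; rewrite addn0.
case/orP => [r | /existsP [x /andP [r a]]]; rewrite addnS; first by rewrite /= IH.
exact: reach_step (IH _ r) a.
Qed.

Lemma reach_lipschitz (F : T -> nat) c :
  (forall x y, adj x y -> F y <= F x + c) ->
  forall m u v, reach adj m u v -> F v <= F u + c * m.
Proof.
move=> HF; elim=> [|m IH] u v /=; first by move/eqP ->; rewrite muln0 addn0.
case/orP => [/IH | /existsP [x /andP [/IH r /HF a]]]; lia.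
Qed.

Hypothesis adj_sym : symmetric adj.

Lemma reach_sym m u v : reach adj m u v -> reach adj m v u.
Proof.
elim: m v => [|m IH] v /=; first by rewrite eq_sym.
case/orP => [/IH -> // | /existsP [x /andP [/IH r a]]].
have vx1 : reach adj 1 v x by apply: (@reach_step 0 v v x); rewrite //= adj_sym.
exact: reach_cat vx1 r.
Qed.

Hypothesis connected : forall u v, exists2 m, m < #|T| & reach adj m u v.

Lemma gdist_has u v : has (fun m => reach adj m u v) (iota 0 #|T|).
Proof. by have [m lt r] := connected u v; apply/hasP; exists m; rewrite ?mem_iota. Qed.

Lemma gdist_lt u v : gdist adj u v < #|T|.
Proof. by rewrite /gdist -{2}(size_iota 0 #|T|) -has_find gdist_has. Qed.

Lemma gdist_reach u v : reach adj (gdist adj u v) u v.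
Proof. by have := nth_find 0 (gdist_has u v); rewrite nth_iota ?gdist_lt. Qed.

Lemma gdist_min m u v : reach adj m u v -> gdist adj u v <= m.
Proof.
move=> r; case: (leqP #|T| m) => hm; first exact: ltnW (leq_trans (gdist_lt u v) hm).
rewrite leqNgt; apply/negP => lt.
by have := before_find 0 lt; rewrite nth_iota // add0n r.
Qed.

Lemma gdist_sym u v : gdist adj u v = gdist adj v u.
Proof. by apply/eqP; rewrite eqn_leq !gdist_min // reach_sym // gdist_reach. Qed.

Lemma gdist_triangle u w v : gdist adj u v <= gdist adj u w + gdist adj w v.
Proof. by apply: gdist_min; apply: reach_cat; apply: gdist_reach. Qed.

Lemma gdist_lipschitz (F : T -> nat) c :
  (forall x y, adj x y -> F y <= F x + c) ->
  forall u v, F v <= F u + c * gdist adj u v.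
Proof. by move=> HF u v; apply: reach_lipschitz HF _ _ _ (gdist_reach u v). Qed.

Lemma gdist_last_step w u :
  w != u -> exists2 x, adj u x & (gdist adj w x).+1 <= gdist adj w u.
Proof.
move=> wu; move: (gdist_reach w u); case E: (gdist adj w u) => [|m] /=.
  by move=> h; rewrite h in wu.
case/orP => [/gdist_min | /existsP [x /andP [r a]]]; first by rewrite E ltnn.
by exists x; rewrite 1?adj_sym // ltnS gdist_min.
Qed.

Definition maximally_distant (u v : T) : Prop :=
  forall x, adj u x -> gdist adj v x <= gdist adj v u.

Lemma maximally_distant_geodesic w u v : maximally_distant u v ->
  gdist adj v w = gdist adj v u + gdist adj u w -> w = u.
Proof.
move=> Hu E; apply/eqP; apply: contraT => wu.
have [x ux lt] := gdist_last_step wu.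
have := Hu x ux; have := gdist_triangle v x w.
have := gdist_sym x w; have := gdist_sym u w; lia.
Qed.

Lemma strongly_resolves_mutually_maximal w u v :
  maximally_distant u v -> maximally_distant v u ->
  strongly_resolves adj w u v -> w = u \/ w = v.
Proof.
move=> Hu Hv /orP [/eqP E | /eqP E].
- by left; apply: maximally_distant_geodesic Hu E.
- by right; apply: maximally_distant_geodesic Hv E.
Qed.

Lemma mutually_maximal_pair_meets (S : {set T}) u v :
  strong_resolving_set adj S -> u != v ->
  maximally_distant u v -> maximally_distant v u -> (u \in S) || (v \in S).
Proof.
move=> HS uv Hu Hv; have [w wS] := HS u v uv.
by case/(strongly_resolves_mutually_maximal Hu Hv) => <-; rewrite wS ?orbT.
Qed.
End GraphDistance.

Lemma pair_transversal_card_leq (T : finType) (S : {set T}) m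
    (f1 f2 : 'I_m -> T) (g : T -> nat) :
  (forall i, g (f1 i) = i) -> (forall i, g (f2 i) = i) ->
  (forall i, (f1 i \in S) || (f2 i \in S)) -> m <= #|S|.
Proof.
move=> g1 g2 meets.
pose c i := if f1 i \in S then f1 i else f2 i.
have cS i : c i \in S by move: (meets i); rewrite /c; case: ifP.
have c_inj : injective c.
  move=> i j eq_c; apply: val_inj.
  have gc l : g (c l) = l by rewrite /c; case: ifP.
  by rewrite /= -(gc i) -(gc j) eq_c.
rewrite -[m]card_ord -(card_imset _ c_inj); apply: subset_leq_card.
by apply/subsetP => _ /imsetP [i _ ->].
Qed.

Definition LA : 'I_4 := @Ordinal 4 0 isT.
Definition LB : 'I_4 := @Ordinal 4 1 isT.
Definition LC : 'I_4 := @Ordinal 4 2 isT.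
Definition LD : 'I_4 := @Ordinal 4 3 isT.

Lemma layer_cases (t : 'I_4) : [\/ t = LA, t = LB, t = LC | t = LD].
Proof.
case: t => [[|[|[|[|m]]]] hm] //.
- by apply: Or41; apply: val_inj.
- by apply: Or42; apply: val_inj.
- by apply: Or43; apply: val_inj.
- by apply: Or44; apply: val_inj.
Qed.

Section SnGraph.
Variable k : nat.
Hypothesis hk : 2 <= k.
Local Notation n := (2 * k).
Local Notation T := (Sn_vertex (2 * k)).
Local Notation adj := (@Sn_adj (2 * k)).

Lemma n_gt0 : 0 < n. Proof. lia. Qed.

Definition vx (t : 'I_4) (i : nat) : T := (t, Ordinal (ltn_pmod i n_gt0)).

Lemma vx_mod t i j : i %% n = j %% n -> vx t i = vx t j.
Proof. by move=> h; congr pair; apply: val_inj. Qed.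

Lemma vx_modn t i : vx t i = vx t (i %% n).
Proof. by apply: vx_mod; rewrite modn_mod. Qed.

Lemma vx_ind (P : T -> Prop) : (forall t i, i < n -> P (vx t i)) -> forall x, P x.
Proof.
move=> H [t i]; have -> : (t, i) = vx t i.
  by congr pair; apply: val_inj; rewrite /= modn_small.
exact: H.
Qed.

Lemma Sn_adj_sym : symmetric adj.
Proof. by move=> x y; rewrite /Sn_adj orbC. Qed.

Lemma modSn_mod i : (i %% n).+1 %% n = i.+1 %% n.
Proof. by rewrite -[(i %% n).+1]addn1 -[i.+1]addn1 modnDml. Qed.

Lemma adj_layer t i : adj (vx t i) (vx t i.+1).
Proof. by rewrite /Sn_adj /Sn_edge /= eqxx modSn_mod eqxx. Qed.

Lemma adj_ab i : adj (vx LA i) (vx LB i).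
Proof. by rewrite /Sn_adj /Sn_edge /= eqxx /= ?orbT. Qed.

Lemma adj_aSb i : adj (vx LA i.+1) (vx LB i).
Proof. by rewrite /Sn_adj /Sn_edge /= modSn_mod eqxx /= ?orbT. Qed.

Lemma adj_bc i : adj (vx LB i) (vx LC i).
Proof. by rewrite /Sn_adj /Sn_edge /= eqxx /= ?orbT. Qed.

Lemma adj_cd i : adj (vx LC i) (vx LD i).
Proof. by rewrite /Sn_adj /Sn_edge /= eqxx /= ?orbT. Qed.

Lemma adj_cb i : adj (vx LC i) (vx LB i).
Proof. by rewrite Sn_adj_sym adj_bc. Qed.

Lemma adj_dc i : adj (vx LD i) (vx LC i).
Proof. by rewrite Sn_adj_sym adj_cd. Qed.

Lemma adj_b_aS i e : e <= 1 -> adj (vx LB (i + e)) (vx LA i.+1).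
Proof. by case: e => [|[|]] // _; rewrite Sn_adj_sym ?addn0 ?addn1 ?adj_aSb ?adj_ab. Qed.

Lemma adj_a_b i e : e <= 1 -> adj (vx LA (i + e)) (vx LB i).
Proof. by case: e => [|[|]] // _; rewrite ?addn0 ?addn1 ?adj_aSb ?adj_ab. Qed.

Lemma reach_layer_fwd t i m : reach adj m (vx t i) (vx t (i + m)).
Proof.
elim: m => [|m IH]; first by rewrite addn0 /=.
by rewrite addnS; apply: reach_step IH (adj_layer _ _).
Qed.

Lemma reach_layer_offset t i j m : i + m = j \/ i + m = j + n ->
  reach adj m (vx t i) (vx t j).
Proof.
case=> h; have := reach_layer_fwd t i m; rewrite h //.
by rewrite (@vx_mod t (j + n) j) ?modnDr.
Qed.

Lemma reach_layer_near_lt t i j : i < n -> j < n ->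
  exists2 e, e <= 1 & reach adj k.-1 (vx t i) (vx t (j + e)).
Proof.
move=> hi hj; have [d hd off] : exists2 d, d < n & i + d = j \/ i + d = j + n.
  by case: (leqP i j) => ij; [exists (j - i) | exists (j + n - i)]; lia.
have back m j' : j' + m = i \/ j' + m = i + n -> reach adj m (vx t i) (vx t j').
  by move=> /(reach_layer_offset t)/(reach_sym Sn_adj_sym).
case: (ltngtP d k) => hdk.
- by exists 0; rewrite ?addn0 //; apply: reach_mono (reach_layer_offset t off); lia.
- by exists 0; rewrite ?addn0 //; apply: reach_mono (back (n - d) _ _); lia.
- by exists 1 => //; apply: back; lia.
Qed.

Lemma reach_layer_near t i j :
  exists2 e, e <= 1 & reach adj k.-1 (vx t i) (vx t (j + e)).
Proof.
have [e he r] := reach_layer_near_lt t (ltn_pmod i n_gt0) (ltn_pmod j n_gt0).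
by exists e; rewrite // (vx_modn t i) (@vx_mod t (j + e) (j %% n + e)) ?modnDml.
Qed.

Lemma reach_layer t i j : reach adj k (vx t i) (vx t j).
Proof.
have [[|[|]] // _ r] := reach_layer_near t i j.
- by rewrite addn0 in r; apply: reach_mono r; lia.
- rewrite addn1 in r; apply: reach_mono (reach_step r _); first lia.
  by rewrite Sn_adj_sym adj_layer.
Qed.

Lemma vx_a_pred i : vx LA i = vx LA (i + n.-1).+1.
Proof. by apply: vx_mod; rewrite -addnS prednK ?n_gt0 // modnDr. Qed.

Lemma reach_from_d j x : reach adj (k + 2) (vx LD j) x.
Proof.
move: x; apply: vx_ind => t i _; case: (layer_cases t) => ->.
- rewrite vx_a_pred; have [e he r] := reach_layer_near LD j (i + n.-1).
  apply: (@reach_mono _ _ k.-1.+3); first lia.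
  exact: reach_step (reach_step (reach_step r (adj_dc _)) (adj_cb _)) (adj_b_aS _ he).
- rewrite addn2.
  exact: reach_step (reach_step (reach_layer _ _ _) (adj_dc _)) (adj_cb _).
- by apply: reach_mono (reach_step (reach_layer _ _ _) (adj_dc _)); lia.
- by apply: reach_mono (reach_layer _ _ _); lia.
Qed.

Lemma reach_from_b j x : reach adj (k + 2) (vx LB j) x.
Proof.
move: x; apply: vx_ind => t i _; case: (layer_cases t) => ->.
- rewrite vx_a_pred; have [e he r] := reach_layer_near LB j (i + n.-1).
  by apply: reach_mono (reach_step r (adj_b_aS _ he)); lia.
- by apply: reach_mono (reach_layer _ _ _); lia.
- by apply: reach_mono (reach_step (reach_layer _ _ _) (adj_bc _)); lia.
- rewrite addn2.
  exact: reach_step (reach_step (reach_layer _ _ _) (adj_bc _)) (adj_cd _).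
Qed.

Lemma reach_from_a j (x : T) : x.1 <= 1 -> reach adj k (vx LA j) x.
Proof.
move: x; apply: vx_ind => t i _; case: (layer_cases t) => -> // _.
- exact: reach_layer.
- have [e he r] := reach_layer_near LA j i.
  by apply: reach_mono (reach_step r (adj_a_b _ he)); lia.
Qed.

Lemma reach_to_d t i : reach adj 3 (vx t i) (vx LD i).
Proof.
have r0 (u : T) : reach adj 0 u u by rewrite /=.
case: (layer_cases t) => ->.
- exact: reach_step (reach_step (reach_step (r0 _) (adj_ab _)) (adj_bc _)) (adj_cd _).
- exact: reach_mono (reach_step (reach_step (r0 _) (adj_bc _)) (adj_cd _)).
- exact: reach_mono (reach_step (r0 _) (adj_cd _)).
- exact: reach_mono (r0 _).
Qed.

Lemma Sn_connected (u v : T) : exists2 m, m < #|{: T}| & reach adj m u v.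
Proof.
move: u; apply: vx_ind => t i _; exists (3 + (k + 2)).
  by rewrite card_prod !card_ord; lia.
exact: reach_cat (reach_to_d t i) (reach_from_d i v).
Qed.

(* Place a_i at 2i and b_i, c_i, d_i at 2i + 1 on a cycle of length 4k, at heights
   5, 4, 2, 0: every edge changes [potential q] by at most 2, which yields the
   lower bounds on distances. *)
Definition cyc_dist (N p q : nat) : nat :=
  minn (p - q + (q - p)) (N - (p - q + (q - p))).

Definition pos (x : T) : nat := if val x.1 == 0 then 2 * x.2 else (2 * x.2).+1.

Definition height (x : T) : nat :=
  match val x.1 with 0 => 5 | 1 => 4 | 2 => 2 | _ => 0 end.

Definition potential (q : nat) (x : T) : nat :=
  height x + cyc_dist (4 * k) (pos x) q.

Lemma pos_lt x : pos x < 4 * k.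
Proof. by case: x => t [i hi]; rewrite /pos /=; case: eqP; lia. Qed.

Lemma modSn_cases i : i < n ->
  i.+1 %% n = i.+1 /\ i.+1 < n \/ i.+1 %% n = 0 /\ i.+1 = n.
Proof.
move=> hi; case: (ltngtP i.+1 n) => h; [by left; rewrite modn_small | lia | ].
by right; rewrite h modnn.
Qed.

Lemma potential_edge q x y : q < 4 * k -> Sn_edge x y ->
  potential q y <= potential q x + 2 /\ potential q x <= potential q y + 2.
Proof.
move=> hq; case: x y => [[t ht] [i hi]] [[s hs] [j hj]].
rewrite /Sn_edge /potential /height /pos /cyc_dist /=.
case: (modSn_cases hi) => [[-> ?]|[-> ?]]; case: (modSn_cases hj) => [[-> ?]|[-> ?]];
case: t ht => [|[|[|[|t]]]] ht //; case: s hs => [|[|[|[|s]]]] hs //=; lia.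
Qed.

Lemma gdist_potential q u v : q < 4 * k ->
  potential q v <= potential q u + 2 * gdist adj u v.
Proof.
move=> hq; apply: (gdist_lipschitz Sn_connected) => x y.
by case/orP => /(potential_edge hq) [].
Qed.

Lemma modn_lt_double i : i < n + n ->
  i %% n = i /\ i < n \/ i %% n = i - n /\ n <= i.
Proof.
move=> hi; case: (ltnP i n) => h; first by left; rewrite modn_small.
by right; rewrite -{1}(subnK h) modnDr modn_small //; lia.
Qed.

Lemma gdist_d_b i : i < n -> k + 2 <= gdist adj (vx LD (i + k)) (vx LB i).
Proof.
move=> hi; have := gdist_potential (vx LD (i + k)) (vx LB i) (pos_lt (vx LD (i + k))).
rewrite /potential /height /pos /cyc_dist /= (modn_small hi).
have : i + k < n + n by lia.
by case/modn_lt_double => [[-> ?]|[-> ?]]; lia.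
Qed.

Lemma gdist_a_a i : i < k -> k <= gdist adj (vx LA i) (vx LA (i + k)).
Proof.
move=> hi; have := gdist_potential (vx LA i) (vx LA (i + k)) (pos_lt (vx LA i)).
by rewrite /potential /height /pos /cyc_dist /= !modn_small; lia.
Qed.

Lemma adj_a_layer i (y : T) : adj (vx LA i) y -> y.1 <= 1.
Proof.
case: y => [[s hs] j]; rewrite /Sn_adj /Sn_edge /=.
by case: s hs => [|[|[|[|s]]]] hs //=.
Qed.

Lemma b_d_pair_meets (S : {set T}) i : strong_resolving_set adj S -> i < n ->
  (vx LB i \in S) || (vx LD (i + k) \in S).
Proof.
move=> HS hi; apply: (mutually_maximal_pair_meets Sn_adj_sym Sn_connected HS).
- by apply/eqP => /(congr1 (fun x : T => val x.1)).
- move=> x _; have le_xk := gdist_min Sn_connected (reach_from_d (i + k) x).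
  exact: leq_trans le_xk (gdist_d_b hi).
- move=> x _; have le_xk := gdist_min Sn_connected (reach_from_b i x).
  by apply: leq_trans le_xk _; rewrite (gdist_sym Sn_adj_sym Sn_connected) gdist_d_b.
Qed.

Lemma a_a_pair_meets (S : {set T}) i : strong_resolving_set adj S -> i < k ->
  (vx LA i \in S) || (vx LA (i + k) \in S).
Proof.
move=> HS hi; apply: (mutually_maximal_pair_meets Sn_adj_sym Sn_connected HS).
- by apply/eqP => /(congr1 (fun x : T => val x.2)) /=; rewrite !modn_small; lia.
- move=> x /adj_a_layer/(reach_from_a (i + k))/(gdist_min Sn_connected) le_xk.
  by apply: leq_trans le_xk _; rewrite (gdist_sym Sn_adj_sym Sn_connected) gdist_a_a.
- move=> x /adj_a_layer/(reach_from_a i)/(gdist_min Sn_connected) le_xk.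
  exact: leq_trans le_xk (gdist_a_a hi).
Qed.

Definition pair_fst (m : nat) : T := if m < n then vx LB m else vx LA (m - n).

Definition pair_snd (m : nat) : T :=
  if m < n then vx LD (m + k) else vx LA (m - n + k).

Definition pair_index (x : T) : nat :=
  match val x.1 with
  | 0 => if x.2 < k then n + x.2 else n + x.2 - k
  | 1 => x.2
  | _ => (x.2 + k) %% n
  end.

Lemma pair_index_fst m : m < 3 * k -> pair_index (pair_fst m) = m.
Proof.
move=> hm; rewrite /pair_fst /pair_index.
case: ltnP => h /=; first by rewrite modn_small.
by rewrite modn_small; case: ltnP; lia.
Qed.

Lemma pair_index_snd m : m < 3 * k -> pair_index (pair_snd m) = m.
Proof.
move=> hm; rewrite /pair_snd /pair_index; case: ltnP => h /=.
  by rewrite modnDml (_ : m + k + k = m + n) ?modnDr ?modn_small //; lia.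
by rewrite modn_small; case: ltnP; lia.
Qed.

Lemma pair_meets (S : {set T}) m : strong_resolving_set adj S -> m < 3 * k ->
  (pair_fst m \in S) || (pair_snd m \in S).
Proof.
move=> HS hm; rewrite /pair_fst /pair_snd; case: ltnP => h.
- exact: b_d_pair_meets.
- by apply: a_a_pair_meets HS _; lia.
Qed.
End SnGraph.

Theorem lemma3p11 (k : nat) (hk : 2 <= k) (S : {set Sn_vertex (2 * k)}) :
  strong_resolving_set (@Sn_adj (2 * k)) S -> 3 * k <= #|S|.
Proof.
move=> HS; apply: (@pair_transversal_card_leq _ S (3 * k)
  (fun m => pair_fst hk m) (fun m => pair_snd hk m) (@pair_index k)) => m.
- exact: pair_index_fst.
- exact: pair_index_snd.
- exact: pair_meets.
Qed.
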